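(* Let $d\ge1$, $\emptyset\ne H\subset\mathbb{R}^d$, $R>0$, and let $x,y\in\mathbb{R}^d$ with $d(x,H)\ge R$ and $d(y,H)\ge R$. Then for every $0\le\Delta\le R$, $$d(T_\Delta x,T_\Delta y)\ge\frac{R-\Delta}{R}\,d(x,y).$$
   Context: $d(\cdot,\cdot)$ is Euclidean distance and $d(x,H)=\inf_{z\in H}|x-z|$. Let $\bar H$ be the closure of $H$; for each $x$ let $\pi(x)\in\bar H$ be a point with $|x-\pi(x)|=d(x,H)$ (any one if several). For $\Delta\ge0$, $T_\Delta x:=x+\Delta\frac{\pi(x)-x}{|\pi(x)-x|}$ if $d(x,H)>\Delta$ and $T_\Delta x:=\pi(x)$ if $d(x,H)\le\Delta$. *)

From HB Require Import structures.
From mathcomp Require Import all_boot all_order all_algebra.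
From mathcomp Require Import all_classical all_reals all_analysis.
Set Implicit Arguments. Unset Strict Implicit. Unset Printing Implicit Defensive.
Import Order.TTheory GRing.Theory Num.Theory.
Import numFieldNormedType.Exports.
Local Open Scope classical_set_scope.
Local Open Scope ring_scope.

(* Euclidean norm |v| on R^d (the library's norm on matrices is the sup norm). *)
Definition enorm (R : realType) (d : nat) (v : 'rV[R]_d) : R :=
  Num.sqrt (\sum_(i < d) v ord0 i ^+ 2).

Definition eucl_dist (R : realType) (d : nat) (x y : 'rV[R]_d) : R := enorm (x - y).

Definition eucl_dist_set (R : realType) (d : nat) (x : 'rV[R]_d) (H : set 'rV[R]_d) : R :=
  inf [set eucl_dist x z | z in H].

Definition nearest_point_map (R : realType) (d : nat) (H : set 'rV[R]_d)
  (pi : 'rV[R]_d -> 'rV[R]_d) : Prop :=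
  forall x, closure H (pi x) /\ eucl_dist x (pi x) = eucl_dist_set x H.

Definition Tmap (R : realType) (d : nat) (H : set 'rV[R]_d)
  (pi : 'rV[R]_d -> 'rV[R]_d) (Delta : R) (x : 'rV[R]_d) : 'rV[R]_d :=
  if Delta < eucl_dist_set x H
  then x + (Delta / enorm (pi x - x)) *: (pi x - x)
  else pi x.

From HB Require Import structures.
From mathcomp Require Import all_boot all_order all_algebra.
From mathcomp Require Import all_classical all_reals all_analysis.
From mathcomp Require Import ring lra.
Import Order.TTheory GRing.Theory Num.Theory.
Import numFieldNormedType.Exports.
Set Implicit Arguments. Unset Strict Implicit.
Local Open Scope classical_set_scope.
Local Open Scope ring_scope.

(* Put a = x - pi x, b = y - pi y, w = x - y, al = d(x,H), be = d(y,H), so that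
   T x - T y = w - (Delta/al) a + (Delta/be) b.  Since pi y and pi x lie in the
   closure of H, |w + b| = |x - pi y| >= al and |a - w| = |y - pi x| >= be; these
   bound <a,w> above and <b,w> below, and with al, be >= r they give
   <T x - T y, w> >= (1 - Delta/r) |w|^2.  Expanding |(T x - T y) - c w|^2 >= 0
   with c = 1 - Delta/r turns this into |T x - T y| >= c |w|. *)

Lemma projection_gap_le (R : realFieldType) (r al be A B W : R) :
  0 < r -> r <= al -> r <= be -> 0 <= W ->
  2 * A <= al ^+ 2 - be ^+ 2 + W -> al ^+ 2 - be ^+ 2 - W <= 2 * B ->
  A / al - B / be <= W / r.
Proof.
move=> r0 ral rbe W0 hA hB.
have al0 : 0 < al by exact: lt_le_trans ral.
have be0 : 0 < be by exact: lt_le_trans rbe.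
have -> : A / al - B / be = (A * be - B * al) / (al * be) by field; rewrite ?gt_eqF.
rewrite ler_pdivrMr ?mulr_gt0 // mulrAC ler_pdivlMr //.
have hA' : 2 * A * (be * r) <= (al ^+ 2 - be ^+ 2 + W) * (be * r).
  by apply: ler_wpM2r => //; rewrite mulr_ge0 // ltW.
have hB' : (al ^+ 2 - be ^+ 2 - W) * (al * r) <= 2 * B * (al * r).
  by apply: ler_wpM2r => //; rewrite mulr_ge0 // ltW.
have hWa : W * (al * r) <= W * (al * be).
  by apply: ler_wpM2l => //; apply: ler_wpM2l => //; exact: ltW.
have hWb : W * (be * r) <= W * (be * al).
  by apply: ler_wpM2l => //; apply: ler_wpM2l => //; exact: ltW.
(* The cross term (al^2 - be^2) (be - al) equals -(al + be) (al - be)^2. *)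
have sq : 0 <= (al + be) * (al - be) ^+ 2 * r.
  apply: mulr_ge0 (ltW r0); apply: mulr_ge0 (sqr_ge0 _).
  exact: addr_ge0 (ltW al0) (ltW be0).
lra.
Qed.

Section InnerProduct.
Variables (R : realType) (d : nat).
Implicit Types (u v w : 'rV[R]_d) (k : R).

Definition dot u v : R := \sum_(i < d) u ord0 i * v ord0 i.

Lemma dotC u v : dot u v = dot v u.
Proof. by apply: eq_bigr => i _; rewrite mulrC. Qed.

Lemma dotDl u v w : dot (u + v) w = dot u w + dot v w.
Proof. by rewrite /dot -big_split; apply: eq_bigr => i _; rewrite !mxE mulrDl. Qed.

Lemma dotZl k u w : dot (k *: u) w = k * dot u w.
Proof. by rewrite /dot mulr_sumr; apply: eq_bigr => i _; rewrite !mxE mulrA. Qed.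

Lemma dotNl u w : dot (- u) w = - dot u w.
Proof. by rewrite -scaleN1r dotZl mulN1r. Qed.

Lemma dotBl u v w : dot (u - v) w = dot u w - dot v w.
Proof. by rewrite dotDl dotNl. Qed.

Lemma dotZr k u w : dot w (k *: u) = k * dot w u.
Proof. by rewrite !(dotC w) dotZl. Qed.

Lemma dotDr u v w : dot w (u + v) = dot w u + dot w v.
Proof. by rewrite !(dotC w) dotDl. Qed.

Lemma dotvv_ge0 u : 0 <= dot u u.
Proof. by apply: sumr_ge0 => i _; rewrite -expr2 sqr_ge0. Qed.

Lemma enormE u : enorm u = Num.sqrt (dot u u).
Proof. by congr Num.sqrt; apply: eq_bigr => i _; rewrite expr2. Qed.

Lemma enorm_ge0 u : 0 <= enorm u.
Proof. exact: sqrtr_ge0. Qed.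

Lemma enorm_sqr u : enorm u ^+ 2 = dot u u.
Proof. by rewrite enormE sqr_sqrtr // dotvv_ge0. Qed.

Lemma enormN u : enorm (- u) = enorm u.
Proof. by rewrite !enormE dotNl dotC dotNl opprK. Qed.

Lemma enorm_sqrD u v : enorm (u + v) ^+ 2 = enorm u ^+ 2 + 2 * dot u v + enorm v ^+ 2.
Proof. rewrite !enorm_sqr !(dotDl, dotDr) (dotC v u); ring. Qed.

Lemma enorm_sqrB u v : enorm (u - v) ^+ 2 = enorm u ^+ 2 - 2 * dot u v + enorm v ^+ 2.
Proof. by rewrite enorm_sqrD enormN dotC dotNl dotC mulrN. Qed.

Lemma enorm_continuous : continuous (@enorm R d).
Proof.
move=> u; apply: continuous_comp (@sqrt_continuous R _).
apply: continuous_big => [|i _ v]; first exact: add_continuous.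
apply: (@continuous_comp _ _ _ (fun M : 'rV[R]_d => M ord0 i) (fun t => t ^+ 2)).
  exact: coord_continuous.
exact: exprn_continuous.
Qed.

Lemma enorm_ler_of_dot k u w : 0 <= k -> k * dot w w <= dot u w -> k * enorm w <= enorm u.
Proof.
move=> k0 kwu.
have : 0 <= enorm (u - k *: w) ^+ 2 by exact: sqr_ge0.
rewrite enorm_sqrB dotZr enorm_sqr => h.
rewrite -(@ler_pXn2r _ 2) ?nnegrE ?mulr_ge0 ?enorm_ge0 //.
rewrite exprMn !enorm_sqr dotZl dotZr in h *.
nra.
Qed.

Lemma dot_step_toward_ge (r Delta al be : R) (a b w : 'rV[R]_d) :
  0 < r -> r <= al -> r <= be -> 0 <= Delta -> Delta <= r ->
  enorm a = al -> enorm b = be -> al <= enorm (w + b) -> be <= enorm (a - w) ->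
  (r - Delta) / r * dot w w <= dot (w - (Delta / al) *: a + (Delta / be) *: b) w.
Proof.
move=> r0 ral rbe D0 Dr na nb hal hbe.
have al0 : 0 <= al by rewrite -na enorm_ge0.
have be0 : 0 <= be by rewrite -nb enorm_ge0.
rewrite -ler_sqr ?nnegrE ?enorm_ge0 // enorm_sqrD nb enorm_sqr in hal.
rewrite -ler_sqr ?nnegrE ?enorm_ge0 // enorm_sqrB na enorm_sqr in hbe.
have hA : 2 * dot a w <= al ^+ 2 - be ^+ 2 + dot w w by lra.
have hB : al ^+ 2 - be ^+ 2 - dot w w <= 2 * dot w b by lra.
have gap := projection_gap_le r0 ral rbe (dotvv_ge0 w) hA hB.
have := ler_wpM2l D0 gap.
rewrite dotDl dotBl !dotZl (dotC b w) mulrBl.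
by rewrite divff ?gt_eqF // => ?; lra.
Qed.

Lemma eucl_dist_set_le_closure (H : set 'rV[R]_d) x z :
  closure H z -> eucl_dist_set x H <= eucl_dist x z.
Proof.
move=> Hz.
have dist_cont : continuous (eucl_dist x).
  move=> y; have sub_cont : {for y, continuous (fun z : 'rV[R]_d => x - z)}.
    by apply: continuousB; [exact: cst_continuous | exact: cvg_id].
  by apply: continuous_comp sub_cont _; exact: enorm_continuous.
have closedS : closed (eucl_dist x @^-1` [set t | eucl_dist_set x H <= t]).
  by move/continuous_closedP: dist_cont; apply; exact: closed_ge.
have HS : H `<=` eucl_dist x @^-1` [set t | eucl_dist_set x H <= t].
  move=> h Hh; apply: ge_inf; last by exists h.
  by exists 0 => _ [? _ <-]; exact: enorm_ge0.
by move: (closureS HS Hz); rewrite -(closure_id _).1.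
Qed.

Lemma TmapE (H : set 'rV[R]_d) pi Delta z :
  nearest_point_map H pi -> 0 < eucl_dist_set z H -> Delta <= eucl_dist_set z H ->
  Tmap H pi Delta z = z - (Delta / eucl_dist_set z H) *: (z - pi z).
Proof.
rewrite /Tmap => np; have [_ <-] := np z; rewrite /eucl_dist => z0 Dz.
case: ltP => [_|zD]; first by rewrite -[pi z - z]opprB enormN scalerN.
have <- : Delta = enorm (z - pi z) by apply/le_anti; rewrite Dz.
by rewrite divff ?gt_eqF ?(lt_le_trans z0) // scale1r opprB addrC subrK.
Qed.

End InnerProduct.

Theorem proposition1 (R : realType) (d : nat) (H : set 'rV[R]_d)
  (pi : 'rV[R]_d -> 'rV[R]_d) (r Delta : R) (x y : 'rV[R]_d) :
  (1 <= d)%N -> H !=set0 -> 0 < r ->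
  nearest_point_map H pi ->
  r <= eucl_dist_set x H -> r <= eucl_dist_set y H ->
  0 <= Delta -> Delta <= r ->
  (r - Delta) / r * eucl_dist x y <= eucl_dist (Tmap H pi Delta x) (Tmap H pi Delta y).
Proof.
move=> _ _ r0 np rx ry D0 Dr.
have [pi_x dist_x] := np x; have [pi_y dist_y] := np y.
rewrite /eucl_dist (TmapE np (lt_le_trans r0 rx) (le_trans Dr rx)).
rewrite (TmapE np (lt_le_trans r0 ry) (le_trans Dr ry)).
rewrite opprB addrA addrAC (addrAC x).
apply: enorm_ler_of_dot; first by rewrite divr_ge0 ?subr_ge0 ?(ltW r0).
apply: dot_step_toward_ge => //.
- by rewrite addrA subrK; exact: eucl_dist_set_le_closure.
- by rewrite opprB addrC addrA subrK; exact: eucl_dist_set_le_closure.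
Qed.
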